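(* Let $n\ge1$, $q\ge1$, $p>1$, and suppose $q+1<p$. For each $w\in C(\mathbb{H}^n)\cap L^\infty(\mathbb{H}^n)$ with $w>0$, there is $A>0$ such that if $u_0=Aw$, then there are no positive global classical solutions of $$u_t=u^q\Delta_{\mathbb{H}}u+u^p\ (t>0,\ \eta\in\mathbb{H}^n),\qquad u(0,\eta)=u_0(\eta).$$
   Context: $\mathbb{H}^n$ is $\mathbb{R}^{2n+1}$ with points $\eta=(x,y,\tau)$, $x,y\in\mathbb{R}^n$, $\tau\in\mathbb{R}$, group law $\eta\circ\eta'=(x+x',y+y',\tau+\tau'+2(x\cdot y'-x'\cdot y))$. $X_i=\partial_{x_i}-2y_i\partial_\tau$, $Y_i=\partial_{y_i}+2x_i\partial_\tau$ ($i=1,\dots,n$), and $\Delta_{\mathbb{H}}=\sum_{i=1}^n(X_i^2+Y_i^2)$. A global classical solution is a classical solution on $[0,T]\times\mathbb{H}^n$ for every $T>0$. *)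

From Stdlib Require Import Reals Lra Arith.
From Coquelicot Require Import Coquelicot.
Open Scope R_scope.

Definition idx (n : nat) : Type := { i : nat | (i < n)%nat }.

(* A point eta = (x, y, tau) of H^n = R^{2n+1}. *)
Definition Hpt (n : nat) : Type := ((idx n -> R) * (idx n -> R)) * R.

Definition hx {n} (p : Hpt n) : idx n -> R := fst (fst p).
Definition hy {n} (p : Hpt n) : idx n -> R := snd (fst p).
Definition htau {n} (p : Hpt n) : R := snd p.

Inductive coord (n : nat) : Type :=
| Cx : idx n -> coord n
| Cy : idx n -> coord n
| Ctau : coord n.
Arguments Cx {n} _.
Arguments Cy {n} _.
Arguments Ctau {n}.

Definition upd {n} (v : idx n -> R) (i : idx n) (s : R) : idx n -> R :=
  fun k => if Nat.eq_dec (proj1_sig k) (proj1_sig i) then s else v k.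

Definition getc {n} (p : Hpt n) (c : coord n) : R :=
  match c with
  | Cx i => hx p i
  | Cy i => hy p i
  | Ctau => htau p
  end.

Definition setc {n} (p : Hpt n) (c : coord n) (s : R) : Hpt n :=
  match c with
  | Cx i => ((upd (hx p) i s, hy p), htau p)
  | Cy i => ((hx p, upd (hy p) i s), htau p)
  | Ctau => ((hx p, hy p), s)
  end.

Definition pd {n} (c : coord n) (f : Hpt n -> R) (p : Hpt n) : R :=
  Derive (fun s => f (setc p c s)) (getc p c).

Definition has_pd {n} (c : coord n) (f : Hpt n -> R) (p : Hpt n) : Prop :=
  ex_derive (fun s => f (setc p c s)) (getc p c).

Definition Xf {n} (i : idx n) (f : Hpt n -> R) : Hpt n -> R :=
  fun p => pd (Cx i) f p - 2 * hy p i * pd Ctau f p.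
Definition Yf {n} (i : idx n) (f : Hpt n -> R) : Hpt n -> R :=
  fun p => pd (Cy i) f p + 2 * hx p i * pd Ctau f p.

Definition idx_ext {n} (F : idx n -> R) (k : nat) : R :=
  match Compare_dec.lt_dec k n with
  | left h => F (exist _ k h)
  | right _ => 0
  end.
Definition sum_idx (n : nat) (F : idx n -> R) : R :=
  match n return (idx n -> R) -> R with
  | O => fun _ => 0
  | S m => fun G => sum_n (idx_ext G) m
  end F.

Definition DeltaH {n} (f : Hpt n -> R) (p : Hpt n) : R :=
  sum_idx n (fun i => Xf i (Xf i f) p + Yf i (Yf i f) p).

Definition space_time (n : nat) : Type := (R * Hpt n)%type.

Definition uf {n} (u : R -> Hpt n -> R) : space_time n -> R :=
  fun z => u (fst z) (snd z).

Definition classical_solution (n : nat) (q p T : R) (u0 : Hpt n -> R)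
    (u : R -> Hpt n -> R) : Prop :=
  (forall t eta, 0 <= t <= T ->
     filterlim (uf u) (within (fun z : space_time n => 0 <= fst z <= T)
                          (locally (t, eta)))
               (locally (u t eta))) /\
  (forall t eta, 0 < t < T ->
     ex_derive (fun s => u s eta) t /\
     continuous (fun z : space_time n => Derive (fun s => u s (snd z)) (fst z)) (t, eta) /\
     forall c : coord n,
       has_pd c (u t) eta /\
       continuous (fun z : space_time n => pd c (u (fst z)) (snd z)) (t, eta) /\
       forall c' : coord n,
         has_pd c' (pd c (u t)) eta /\
         continuous (fun z : space_time n => pd c' (pd c (u (fst z))) (snd z)) (t, eta)) /\
  (forall t eta, 0 < t < T ->
     Derive (fun s => u s eta) t =
       Rpower (u t eta) q * DeltaH (u t) eta + Rpower (u t eta) p) /\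
  (forall eta, u 0 eta = u0 eta).

Definition global_classical_solution (n : nat) (q p : R) (u0 : Hpt n -> R)
    (u : R -> Hpt n -> R) : Prop :=
  forall T, 0 < T -> classical_solution n q p T u0 u.

Definition positive_solution {n} (u : R -> Hpt n -> R) : Prop :=
  forall t eta, 0 <= t -> 0 < u t eta.

Definition continuous_bounded {n} (w : Hpt n -> R) : Prop :=
  (forall eta, continuous w eta) /\ (exists M, forall eta, Rabs (w eta) <= M).

From Stdlib Require Import Reals Lra Lia Arith FunctionalExtensionality ClassicalEpsilon Classical.
From Coquelicot Require Import Coquelicot.
Open Scope R_scope.

(* Compare [u] with an explicit subsolution that blows up.  Let [a] solve
   [a' = eps a^p] with [a(0) = a0], so that [a] becomes infinite at a finite time [Tb],
   and let [v(t, eta) = a(t) (1 - a(t)^(p-q-1) rho(eta) / lam)] with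
   [rho = |z|^2 + tau^2].  For a large multiple of [w], [v(0) < u(0)].  At a first contact
   point [(ts, es)] of [u] and [v], [u(ts)] lies above the paraboloid [v(ts)] and touches
   it at [es]; since [X_i] and [Y_i] are ordinary derivatives along straight horizontal
   lines, this gives [Delta_H u >= -a^(p-q) (4n + 8|z|^2) / lam], while [u_t <= v_t].
   With [eps] so small that [s^p + eps (p-q-1) (1-s) - 2 eps s > 0] on [(0, 1]] and
   [lam = (4n + 8) / eps], these contradict the equation.  Hence [u > v] before [Tb], so
   [u(t, 0) > a(t)] tends to infinity, contradicting the continuity of [u] at [(Tb, 0)]. *)

(** * Horizontal lines in [H^n] *)

Lemma idx_inj n (i j : idx n) : proj1_sig i = proj1_sig j -> i = j.
Proof.
  destruct i as [i hi], j as [j hj]; simpl; intros ->. f_equal. apply le_unique.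
Qed.

Lemma upd_same n (v : idx n -> R) i s : upd v i s i = s.
Proof. unfold upd. destruct Nat.eq_dec; congruence. Qed.

Lemma upd_upd n (v : idx n -> R) i a s : upd (upd v i a) i s = upd v i s.
Proof.
  apply functional_extensionality; intro k; unfold upd.
  destruct Nat.eq_dec; reflexivity.
Qed.

Lemma upd_id n (v : idx n -> R) i : upd v i (v i) = v.
Proof.
  apply functional_extensionality; intro k; unfold upd.
  destruct Nat.eq_dec as [e|]; [now rewrite (idx_inj _ _ _ e) | reflexivity].
Qed.

Lemma ball_Hpt_intro n (P Q : Hpt n) e :
  (forall c, Rabs (getc Q c - getc P c) < e) -> ball P e Q.
Proof.
  destruct P as [[px py] pt], Q as [[qx qy] qt]; intros H.
  split; [split|]; [intro i; apply (H (Cx i)) | intro i; apply (H (Cy i)) | apply (H Ctau)].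
Qed.

Lemma ball_Hpt_getc n (P Q : Hpt n) e c :
  ball P e Q -> Rabs (getc Q c - getc P c) < e.
Proof.
  destruct P as [[px py] pt], Q as [[qx qy] qt]; intros [[H1 H2] H3].
  destruct c; [apply H1 | apply H2 | apply H3].
Qed.

Lemma continuous_getc n (c : coord n) (eta : Hpt n) : continuous (fun p => getc p c) eta.
Proof.
  apply filterlim_locally; intros eps. exists eps; intros p Hp.
  apply ball_Hpt_getc, Hp.
Qed.

Definition spatial {n} (c : coord n) : Prop :=
  match c with Ctau => False | _ => True end.

Definition plane_pt {n} (P : Hpt n) (c : coord n) (a b : R) : Hpt n :=
  setc (setc P c a) Ctau b.

Lemma getc_plane_pt n (P : Hpt n) c a b : spatial c -> getc (plane_pt P c a b) c = a.
Proof. destruct c; simpl; try tauto; intros _; apply upd_same. Qed.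

Lemma setc_plane_pt n (P : Hpt n) c a b s :
  spatial c -> setc (plane_pt P c a b) c s = plane_pt P c s b.
Proof.
  destruct P as [[px py] pt]; destruct c; simpl; try tauto; intros _;
    unfold plane_pt; cbn [setc hx hy htau fst snd]; now rewrite upd_upd.
Qed.

Lemma plane_pt_id n (P : Hpt n) c :
  spatial c -> plane_pt P c (getc P c) (getc P Ctau) = P.
Proof.
  destruct P as [[px py] pt]; destruct c; simpl; try tauto; intros _;
    unfold plane_pt; cbn [setc getc hx hy htau fst snd]; now rewrite upd_id.
Qed.

Lemma continuous_plane_pt n (P : Hpt n) c x y : spatial c ->
  filterlim (fun z : R * R => plane_pt P c (fst z) (snd z)) (locally (x, y))
    (locally (plane_pt P c x y)).
Proof.
  intros hc. apply filterlim_locally; intros eps. exists eps; intros [a b] [Ha Hb].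
  apply ball_Hpt_intro; intro c'.
  assert (Hdiag : Rabs (getc P c' - getc P c') < eps)
    by (rewrite Rminus_diag, Rabs_R0; apply cond_pos).
  unfold plane_pt; destruct c as [i|i|], c' as [k|k|];
    cbn [spatial setc getc hx hy htau fst snd] in *; try tauto; try exact Hb;
    unfold upd; repeat destruct Nat.eq_dec; assumption.
Qed.

Definition tau_coef {n} (c : coord n) (p : Hpt n) : R :=
  match c with Cx i => -2 * hy p i | Cy i => 2 * hx p i | Ctau => 0 end.

Lemma tau_coef_plane_pt n (P : Hpt n) c a b :
  spatial c -> tau_coef c (plane_pt P c a b) = tau_coef c P.
Proof. destruct c; simpl; tauto || reflexivity. Qed.

Lemma tau_coef_setc n (P : Hpt n) c c' s : spatial c -> c' = c \/ c' = Ctau ->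
  tau_coef c (setc P c' s) = tau_coef c P.
Proof. intros hc [-> | ->]; destruct c; simpl in *; tauto || reflexivity. Qed.

Lemma continuous_tau_coef n (c : coord n) eta : continuous (tau_coef c) eta.
Proof.
  destruct c; simpl.
  - apply (continuous_mult (fun _ => -2) (fun p => getc p (Cy i))).
    + apply continuous_const.
    + apply continuous_getc.
  - apply (continuous_mult (fun _ => 2) (fun p => getc p (Cx i))).
    + apply continuous_const.
    + apply continuous_getc.
  - apply continuous_const.
Qed.

Definition hfield {n} (c : coord n) (f : Hpt n -> R) : Hpt n -> R :=
  fun p => pd c f p + tau_coef c p * pd Ctau f p.

Lemma Xf_hfield n i (f : Hpt n -> R) : Xf i f = hfield (Cx i) f.
Proof. apply functional_extensionality; intro p; unfold Xf, hfield; simpl; ring. Qed.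

Lemma Yf_hfield n i (f : Hpt n -> R) : Yf i f = hfield (Cy i) f.
Proof. apply functional_extensionality; intro p; unfold Yf, hfield; simpl; ring. Qed.

(* [tau_coef c] is constant along this straight line, so it is an integral curve
   of [hfield c]. *)
Definition hline {n} (P : Hpt n) (c : coord n) (s : R) : Hpt n :=
  plane_pt P c (getc P c + s) (getc P Ctau + tau_coef c P * s).

Lemma hline_0 n (P : Hpt n) c : spatial c -> hline P c 0 = P.
Proof.
  intros hc. unfold hline. rewrite Rplus_0_r, Rmult_0_r, Rplus_0_r. now apply plane_pt_id.
Qed.

Lemma is_derive_hline n c (hc : spatial c) (h : Hpt n -> R) (P : Hpt n) s :
  (forall eta, has_pd c h eta) -> (forall eta, has_pd Ctau h eta) ->
  continuous (pd c h) (hline P c s) ->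
  is_derive (fun s => h (hline P c s)) s (hfield c h (hline P c s)).
Proof.
  intros Hc Htau Hcont.
  set (F := fun a b => h (plane_pt P c a b)).
  set (k := tau_coef c P).
  set (x := getc P c + s); set (y := getc P Ctau + k * s).
  assert (Fa : forall a b, is_derive (fun z => F z b) a (pd c h (plane_pt P c a b))).
  { intros a b. specialize (Hc (plane_pt P c a b)). unfold has_pd, pd in *.
    rewrite getc_plane_pt in * by exact hc.
    apply (is_derive_ext (fun z => h (setc (plane_pt P c a b) c z))).
    - intro z; unfold F; now rewrite setc_plane_pt.
    - now apply Derive_correct. }
  assert (Fb : forall a b, is_derive (fun z => F a z) b (pd Ctau h (plane_pt P c a b)))
    by (intros a b; apply Derive_correct; exact (Htau (plane_pt P c a b))).
  assert (DF : differentiable_pt_lim F x y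
                 (pd c h (plane_pt P c x y)) (pd Ctau h (plane_pt P c x y))).
  { apply filterdiff_differentiable_pt_lim.
    apply (is_derive_filterdiff F x y (fun a b => pd c h (plane_pt P c a b))).
    - apply filter_forall; intros [a b]; apply Fa.
    - apply Fb.
    - apply (filterlim_comp _ _ _ (fun z : R * R => plane_pt P c (fst z) (snd z)) (pd c h)
               _ (locally (plane_pt P c x y))); [now apply continuous_plane_pt | exact Hcont]. }
  unfold hfield, hline; fold k x y. rewrite tau_coef_plane_pt by exact hc. fold k.
  apply is_derive_Reals.
  replace (pd c h (plane_pt P c x y) + k * pd Ctau h (plane_pt P c x y))
    with (pd c h (plane_pt P c x y) * 1 + pd Ctau h (plane_pt P c x y) * k) by ring.
  apply (derivable_pt_lim_comp_2d F (fun s => getc P c + s) (fun s => getc P Ctau + k * s));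
    [exact DF | |]; apply is_derive_Reals; auto_derive; auto; ring.
Qed.

(** * Second derivatives at a contact point *)

Lemma is_derive_pos_strict_local (f : R -> R) x l : is_derive f x l -> 0 < l ->
  exists d, 0 < d /\ forall s, 0 < s < d -> f x < f (x + s) /\ f (x - s) < f x.
Proof.
  intros Hd Hl. apply is_derive_Reals in Hd.
  destruct (Hd (l / 2)) as [d Hd']; [lra|].
  exists d; split; [apply cond_pos|]; intros s Hs; split.
  - assert (H := Hd' s ltac:(lra) ltac:(rewrite Rabs_pos_eq; lra)).
    apply Rabs_def2 in H as [_ H].
    assert (0 < (f (x + s) - f x) / s) by lra.
    assert (0 < f (x + s) - f x); [|lra].
    replace (f (x + s) - f x) with ((f (x + s) - f x) / s * s) by (field; lra).
    apply Rmult_lt_0_compat; lra.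
  - assert (H := Hd' (- s) ltac:(lra) ltac:(rewrite Rabs_Ropp, Rabs_pos_eq; lra)).
    apply Rabs_def2 in H as [_ H].
    replace (x + - s) with (x - s) in H by ring.
    assert (0 < (f (x - s) - f x) / - s) by lra.
    assert (0 < f x - f (x - s)); [|lra].
    replace (f x - f (x - s)) with ((f (x - s) - f x) / - s * s) by (field; lra).
    apply Rmult_lt_0_compat; lra.
Qed.

Lemma is_derive_zero_at_min (f : R -> R) x l :
  (forall s, f x <= f s) -> is_derive f x l -> l = 0.
Proof.
  intros Hmin Hd.
  set (pr := exist _ l (proj1 (is_derive_Reals f x l) Hd) : derivable_pt f x).
  apply (deriv_minimum f (x - 1) (x + 1) x pr); [lra | lra | auto].
Qed.

Lemma is_derive_nonpos_of_left_pos (D : R -> R) x l r :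
  is_derive D x l -> D x = 0 -> 0 < r -> (forall t, x - r < t < x -> 0 < D t) -> l <= 0.
Proof.
  intros Hd H0 Hr Hpos. apply Rnot_lt_le; intro Hl.
  destruct (is_derive_pos_strict_local D x l Hd Hl) as [d [Hd0 Hs]].
  set (s := Rmin d r / 2).
  assert (Rmin d r <= d) by apply Rmin_l.
  assert (Rmin d r <= r) by apply Rmin_r.
  assert (0 < Rmin d r) by (apply Rmin_pos; lra).
  destruct (Hs s ltac:(unfold s; lra)) as [_ Hlt].
  specialize (Hpos (x - s) ltac:(unfold s; lra)). lra.
Qed.

Lemma second_derivative_le_of_contact (phi G phi1 G1 : R -> R) gphi gG :
  (forall s, G s <= phi s) -> G 0 = phi 0 ->
  (forall s, is_derive phi s (phi1 s)) -> (forall s, is_derive G s (G1 s)) ->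
  is_derive phi1 0 gphi -> is_derive G1 0 gG -> gG <= gphi.
Proof.
  intros Hle H0 Hphi HG Hphi1 HG1.
  set (h := fun s => phi s - G s); set (h1 := fun s => phi1 s - G1 s).
  assert (Hh : forall s, is_derive h s (h1 s))
    by (intro s; apply (is_derive_minus phi G); auto).
  assert (Hh1 : is_derive (fun s => - h1 s) 0 (- (gphi - gG)))
    by (apply (is_derive_opp h1), (is_derive_minus phi1 G1); auto).
  assert (Hh0 : h1 0 = 0).
  { apply (is_derive_zero_at_min h 0); [|apply Hh].
    intro s; unfold h; specialize (Hle s); lra. }
  apply Rnot_lt_le; intro Hlt.
  destruct (is_derive_pos_strict_local _ _ _ Hh1 ltac:(lra)) as [d [Hd0 Hs]].
  destruct (MVT_cor2 h h1 0 (d / 2) ltac:(lra)) as [c [Ec Hc]].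
  { intros c _. apply is_derive_Reals, Hh. }
  destruct (Hs c ltac:(lra)) as [Hneg _]. rewrite Rplus_0_l in Hneg.
  specialize (Hle (d / 2)).
  assert (h1 c * (d / 2 - 0) < 0) by (apply Rmult_neg_pos; lra).
  unfold h in Ec; lra.
Qed.

Definition C2 {n} (f : Hpt n -> R) : Prop :=
  forall c eta, has_pd c f eta /\ continuous (pd c f) eta /\
    forall c', has_pd c' (pd c f) eta /\ continuous (pd c' (pd c f)) eta.

Lemma is_derive_hfield n c (hc : spatial c) (f : Hpt n -> R) c' eta :
  c' = c \/ c' = Ctau -> C2 f ->
  is_derive (fun s => hfield c f (setc eta c' s)) (getc eta c')
    (pd c' (pd c f) eta + tau_coef c eta * pd c' (pd Ctau f) eta).
Proof.
  intros hc' Hf. unfold hfield.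
  apply (is_derive_ext
           (fun s => pd c f (setc eta c' s) + tau_coef c eta * pd Ctau f (setc eta c' s))).
  { intro t. now rewrite tau_coef_setc. }
  apply (is_derive_plus (fun s => pd c f (setc eta c' s))
           (fun s => tau_coef c eta * pd Ctau f (setc eta c' s))).
  - apply Derive_correct, (Hf c eta).
  - apply is_derive_scal, Derive_correct, (Hf Ctau eta).
Qed.

Lemma pd_hfield n c (hc : spatial c) (f : Hpt n -> R) c' eta :
  c' = c \/ c' = Ctau -> C2 f ->
  has_pd c' (hfield c f) eta /\
  pd c' (hfield c f) eta = pd c' (pd c f) eta + tau_coef c eta * pd c' (pd Ctau f) eta.
Proof.
  intros hc' Hf. pose proof (is_derive_hfield n c hc f c' eta hc' Hf) as Hd.
  split; [eexists; exact Hd | now apply is_derive_unique].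
Qed.

(* Along [hline P c], [hfield c (hfield c f)] is the second derivative of [f]. *)
Lemma hfield2_ge_of_contact n c (hc : spatial c) (f : Hpt n -> R) (P : Hpt n)
    (G G1 : R -> R) gG :
  C2 f -> (forall s, G s <= f (hline P c s)) -> G 0 = f P ->
  (forall s, is_derive G s (G1 s)) -> is_derive G1 0 gG ->
  gG <= hfield c (hfield c f) P.
Proof.
  intros Hf Hle H0 HG HG1.
  apply (second_derivative_le_of_contact (fun s => f (hline P c s)) G
           (fun s => hfield c f (hline P c s)) G1 _ gG Hle).
  - rewrite hline_0 by exact hc. exact H0.
  - intro s. apply is_derive_hline; [exact hc | intro eta; exact (proj1 (Hf c eta))
              | intro eta; exact (proj1 (Hf Ctau eta)) | exact (proj1 (proj2 (Hf c _)))].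
  - exact HG.
  - assert (Hd := is_derive_hline n c hc (hfield c f) P 0
                    (fun eta => proj1 (pd_hfield n c hc f c eta (or_introl eq_refl) Hf))
                    (fun eta => proj1 (pd_hfield n c hc f Ctau eta (or_intror eq_refl) Hf))).
    rewrite hline_0 in Hd by exact hc. apply Hd.
    apply (continuous_ext (fun eta => pd c (pd c f) eta + tau_coef c eta * pd c (pd Ctau f) eta)).
    { intro eta. symmetry. apply (pd_hfield n c hc f c eta (or_introl eq_refl) Hf). }
    apply (continuous_plus (pd c (pd c f))
             (fun eta => tau_coef c eta * pd c (pd Ctau f) eta)); [apply (Hf c P) |].
    apply (continuous_mult (tau_coef c)); [apply continuous_tau_coef | apply (Hf Ctau P)].
  - exact HG1.
Qed.

(** * The gauge [rho] *)

Fixpoint sum_below (g : nat -> R) (N : nat) : R :=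
  match N with O => 0 | S N' => sum_below g N' + g N' end.

Lemma sum_below_ext g g' N :
  (forall j, (j < N)%nat -> g j = g' j) -> sum_below g N = sum_below g' N.
Proof.
  induction N; intros H; simpl; [reflexivity|].
  rewrite IHN, (H N) by (lia || (intros; apply H; lia)). reflexivity.
Qed.

Lemma sum_below_le g g' N :
  (forall j, (j < N)%nat -> g j <= g' j) -> sum_below g N <= sum_below g' N.
Proof.
  induction N; intros H; simpl; [lra|].
  apply Rplus_le_compat; [apply IHN; intros; apply H |apply H]; lia.
Qed.

Lemma sum_below_affine a b g N :
  sum_below (fun j => a + b * g j) N = INR N * a + b * sum_below g N.
Proof. induction N; simpl sum_below; [simpl; ring | rewrite IHN, S_INR; ring]. Qed.

Lemma sum_below_nonneg g N : (forall k, 0 <= g k) -> 0 <= sum_below g N.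
Proof. intros Hg; induction N; simpl; [lra | specialize (Hg N); lra]. Qed.

Lemma sum_below_term g N j : (forall k, 0 <= g k) -> (j < N)%nat -> g j <= sum_below g N.
Proof.
  intros Hg; induction N; intros Hj; [lia|]; simpl.
  destruct (Nat.eq_dec j N) as [->|ne].
  - pose proof (sum_below_nonneg g N Hg); lra.
  - specialize (IHN ltac:(lia)); specialize (Hg N); lra.
Qed.

Lemma sum_below_upd g g' N j : (j < N)%nat -> (forall k, k <> j -> g' k = g k) ->
  sum_below g' N = sum_below g N - g j + g' j.
Proof.
  induction N; intros Hj H; [lia|]; simpl.
  destruct (Nat.eq_dec j N) as [->|ne].
  - rewrite (sum_below_ext g' g N) by (intros k Hk; apply H; lia). ring.
  - rewrite (IHN ltac:(lia) H), (H N) by lia. ring.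
Qed.

Lemma continuous_sum_below {U : UniformSpace} (F : U -> nat -> R) N x :
  (forall j, (j < N)%nat -> continuous (fun y => F y j) x) ->
  continuous (fun y => sum_below (F y) N) x.
Proof.
  induction N; intros H; simpl; [apply continuous_const|].
  apply (continuous_plus (fun y => sum_below (F y) N) (fun y => F y N));
    [apply IHN; intros; apply H |apply H]; lia.
Qed.

Lemma idx_ext_at n (F : idx n -> R) (i : idx n) : idx_ext F (proj1_sig i) = F i.
Proof.
  unfold idx_ext. destruct Compare_dec.lt_dec as [h|h].
  - f_equal. now apply idx_inj.
  - destruct (h (proj2_sig i)).
Qed.

Lemma sum_idx_sum_below n F : sum_idx n F = sum_below (idx_ext F) n.
Proof.
  destruct n as [|m]; [reflexivity|]. simpl sum_idx. generalize (idx_ext F); clear F; intro g.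
  induction m; [rewrite sum_O; simpl; ring|]. rewrite sum_Sn, IHm. reflexivity.
Qed.

Lemma sum_idx_le n F G : (forall i, F i <= G i) -> sum_idx n F <= sum_idx n G.
Proof.
  intros H. rewrite !sum_idx_sum_below. apply sum_below_le; intros j Hj.
  unfold idx_ext. destruct Compare_dec.lt_dec; [apply H | lra].
Qed.

Lemma sum_idx_affine n a b F :
  sum_idx n (fun i => a + b * F i) = INR n * a + b * sum_idx n F.
Proof.
  rewrite !sum_idx_sum_below, <- sum_below_affine. apply sum_below_ext; intros j Hj.
  unfold idx_ext. destruct Compare_dec.lt_dec; [reflexivity | lia].
Qed.

Lemma sum_idx_nonneg n F : (forall k, 0 <= F k) -> 0 <= sum_idx n F.
Proof.
  intros H. rewrite sum_idx_sum_below. apply sum_below_nonneg; intro k.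
  unfold idx_ext. destruct Compare_dec.lt_dec; [apply H | lra].
Qed.

Lemma sum_idx_term n F i : (forall k, 0 <= F k) -> F i <= sum_idx n F.
Proof.
  intros H. rewrite sum_idx_sum_below, <- idx_ext_at. apply sum_below_term.
  - intro k. unfold idx_ext. destruct Compare_dec.lt_dec; [apply H | lra].
  - apply proj2_sig.
Qed.

Lemma sum_idx_upd n F G i : (forall k, proj1_sig k <> proj1_sig i -> G k = F k) ->
  sum_idx n G = sum_idx n F - F i + G i.
Proof.
  intros H. rewrite !sum_idx_sum_below, <- (idx_ext_at n F i), <- (idx_ext_at n G i).
  apply sum_below_upd; [apply proj2_sig|].
  intros k Hk. unfold idx_ext. destruct Compare_dec.lt_dec; [now apply H | reflexivity].
Qed.

Lemma continuous_sum_idx {U : UniformSpace} n (F : U -> idx n -> R) x :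
  (forall i, continuous (fun y => F y i) x) -> continuous (fun y => sum_idx n (F y)) x.
Proof.
  intros H. apply (continuous_ext (fun y => sum_below (idx_ext (F y)) n)).
  { intro y. symmetry. apply sum_idx_sum_below. }
  apply continuous_sum_below; intros j Hj.
  unfold idx_ext. destruct Compare_dec.lt_dec; [apply H | lia].
Qed.

Definition zsq {n} (eta : Hpt n) : R := sum_idx n (fun k => hx eta k ^ 2 + hy eta k ^ 2).
Definition rho {n} (eta : Hpt n) : R := zsq eta + htau eta ^ 2.

Lemma zsq_nonneg n (eta : Hpt n) : 0 <= zsq eta.
Proof. apply sum_idx_nonneg; intro k; nra. Qed.

Lemma zsq_le_rho n (eta : Hpt n) : zsq eta <= rho eta.
Proof. unfold rho; nra. Qed.

Lemma rho_nonneg n (eta : Hpt n) : 0 <= rho eta.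
Proof. pose proof (zsq_nonneg n eta); unfold rho; nra. Qed.

Lemma rho_plane_pt n (P : Hpt n) c a b : spatial c ->
  rho (plane_pt P c a b) = rho P - getc P c ^ 2 + a ^ 2 - htau P ^ 2 + b ^ 2.
Proof.
  intros hc. unfold rho, zsq, plane_pt.
  destruct c as [i|i|]; simpl in hc; try tauto; cbn [setc getc hx hy htau fst snd];
    (rewrite (sum_idx_upd n (fun k => hx P k ^ 2 + hy P k ^ 2) _ i);
     [ rewrite upd_same; unfold hx, hy, idx; ring
     | intros k Hk; unfold upd; destruct Nat.eq_dec; [contradiction | reflexivity]]).
Qed.

Lemma continuous_rho n (eta : Hpt n) : continuous rho eta.
Proof.
  assert (Hsq : forall c, continuous (fun y : Hpt n => getc y c ^ 2) eta).
  { intro c. apply (continuous_ext (fun y => getc y c * (getc y c * 1))); [reflexivity|].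
    apply (continuous_mult (fun y => getc y c)); [apply continuous_getc|].
    apply (continuous_mult (fun y => getc y c)); [apply continuous_getc | apply continuous_const]. }
  apply (continuous_plus zsq (fun y => htau y ^ 2)); [|apply (Hsq Ctau)].
  apply continuous_sum_idx; intro i.
  apply (continuous_plus (fun y => hx y i ^ 2) (fun y => hy y i ^ 2));
    [apply (Hsq (Cx i)) | apply (Hsq (Cy i))].
Qed.

Lemma Rabs_getc_le n (eta : Hpt n) c : Rabs (getc eta c) <= 1 + rho eta.
Proof.
  assert (H : getc eta c ^ 2 <= rho eta).
  { pose proof (zsq_le_rho n eta); pose proof (zsq_nonneg n eta).
    destruct c as [i|i|]; simpl; [| |unfold rho; nra];
    assert (hx eta i ^ 2 + hy eta i ^ 2 <= zsq eta)
      by (apply (sum_idx_term n (fun k => hx eta k ^ 2 + hy eta k ^ 2)); intro; nra); nra. }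
  destruct (Rle_or_lt 0 (getc eta c)); [rewrite Rabs_pos_eq | rewrite Rabs_left]; nra.
Qed.

Lemma hfield2_ge_of_paraboloid n c (hc : spatial c) (f : Hpt n -> R) (P : Hpt n) K B :
  C2 f -> (forall eta, K - B * rho eta <= f eta) -> K - B * rho P = f P ->
  - B * (2 + 2 * tau_coef c P ^ 2) <= hfield c (hfield c f) P.
Proof.
  intros Hf Hle Heq.
  set (k := tau_coef c P); set (x := getc P c); set (tau := getc P Ctau).
  apply (hfield2_ge_of_contact n c hc f P
           (fun s => K - B * (rho P - x ^ 2 + (x + s) ^ 2 - htau P ^ 2 + (tau + k * s) ^ 2))
           (fun s => - B * (2 * (x + s) + 2 * k * (tau + k * s)))).
  - exact Hf.
  - intro s. unfold hline, x, tau, k. rewrite <- rho_plane_pt by exact hc. apply Hle.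
  - rewrite <- Heq. unfold tau; simpl. f_equal; f_equal; ring.
  - intro s. auto_derive; [auto | ring].
  - auto_derive; [auto | ring].
Qed.

Lemma DeltaH_ge_of_paraboloid n (f : Hpt n -> R) (P : Hpt n) K B :
  C2 f -> (forall eta, K - B * rho eta <= f eta) -> K - B * rho P = f P ->
  - B * (4 * INR n + 8 * zsq P) <= DeltaH f P.
Proof.
  intros Hf Hle Heq. unfold DeltaH.
  replace (- B * (4 * INR n + 8 * zsq P))
    with (sum_idx n (fun i => - 4 * B + - 8 * B * (hx P i ^ 2 + hy P i ^ 2)))
    by (rewrite sum_idx_affine; unfold zsq; ring).
  apply sum_idx_le; intro i. rewrite !Xf_hfield, !Yf_hfield.
  assert (Hx := hfield2_ge_of_paraboloid n (Cx i) I f P K B Hf Hle Heq).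
  assert (Hy := hfield2_ge_of_paraboloid n (Cy i) I f P K B Hf Hle Heq).
  simpl in Hx, Hy. nra.
Qed.

(** * Compactness *)

Definition strict_incr (phi : nat -> nat) : Prop := forall k, (phi k < phi (S k))%nat.

Lemma strict_incr_lt phi : strict_incr phi -> forall a b, (a < b)%nat -> (phi a < phi b)%nat.
Proof. intros H a b Hab. induction Hab; [apply H | specialize (H m); lia]. Qed.

Lemma strict_incr_ge phi : strict_incr phi -> forall k, (k <= phi k)%nat.
Proof. intros H k. induction k; [lia | specialize (H k); lia]. Qed.

Lemma filterlim_strict_incr phi : strict_incr phi -> filterlim phi eventually eventually.
Proof.
  intros H P [N HN]. exists N. intros k Hk. apply HN.
  pose proof (strict_incr_ge phi H k). lia.
Qed.

Lemma is_lim_seq_inv_S : is_lim_seq (fun k => / INR (S k)) 0.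
Proof.
  apply (is_lim_seq_incr_1 (fun k => / INR k)).
  apply (is_lim_seq_inv INR p_infty is_lim_seq_INR). discriminate.
Qed.

Lemma bounded_seq_subseq_cv (u : nat -> R) B : (forall k, Rabs (u k) <= B) ->
  exists phi, strict_incr phi /\ exists l : R, is_lim_seq (fun k => u (phi k)) l.
Proof.
  intros Hb.
  destruct (Bolzano_Weierstrass u (fun c => -B <= c <= B) (compact_P3 (-B) B)) as [l Hl].
  { intro k. specialize (Hb k). apply Rabs_le_between in Hb. lra. }
  assert (Hch : forall Nk : nat * nat, exists p,
             (fst Nk <= p)%nat /\ Rabs (u p - l) < / INR (S (snd Nk))).
  { intros [N k]. assert (pos : 0 < / INR (S k)) by (apply Rinv_0_lt_compat, lt_0_INR; lia).
    destruct (Hl (fun y => Rabs (y - l) < / INR (S k)) N) as [p Hp];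
      [exists (mkposreal _ pos); intros y Hy; exact Hy | now exists p]. }
  destruct (choice _ Hch) as [g Hg].
  set (phi := fix phi k := match k with O => g (O, O) | S k' => g (S (phi k'), S k') end).
  exists phi. split.
  - intro k. simpl. destruct (Hg (S (phi k), S k)). simpl in *. lia.
  - exists l. apply (is_lim_seq_le_le (fun k => l - / INR (S k)) _ (fun k => l + / INR (S k))).
    + intro k. assert (Hk : Rabs (u (phi k) - l) < / INR (S k)) by (destruct k; apply Hg).
      apply Rabs_def2 in Hk. lra.
    + replace (Finite l) with (Rbar_minus l 0) by (simpl; f_equal; ring).
      apply is_lim_seq_minus'; [apply is_lim_seq_const | apply is_lim_seq_inv_S].
    + replace (Finite l) with (Rbar_plus l 0) by (simpl; f_equal; ring).
      apply is_lim_seq_plus'; [apply is_lim_seq_const | apply is_lim_seq_inv_S].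
Qed.

Lemma bounded_seqs_common_subseq_cv (m : nat) (f : nat -> nat -> R) B :
  (forall k j, Rabs (f k j) <= B) ->
  exists phi, strict_incr phi /\
    exists l : nat -> R, forall j, (j < m)%nat -> is_lim_seq (fun k => f (phi k) j) (l j).
Proof.
  intros Hb. induction m as [|m [phi [Hphi [l Hl]]]].
  - exists (fun k => k). split; [intro; lia | exists (fun _ => 0); intros; lia].
  - destruct (bounded_seq_subseq_cv (fun k => f (phi k) m) B) as [psi [Hpsi [lm Hlm]]];
      [intro; apply Hb|].
    exists (fun k => phi (psi k)). split; [intro k; apply strict_incr_lt; auto|].
    exists (fun j => if Nat.eq_dec j m then lm else l j). intros j Hj.
    destruct Nat.eq_dec as [->|ne]; [exact Hlm|].
    apply (is_lim_seq_subseq (fun k => f (phi k) j)); [now apply filterlim_strict_incr|].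
    apply Hl; lia.
Qed.

Lemma eventually_forall_lt (m : nat) (P : nat -> nat -> Prop) :
  (forall j, (j < m)%nat -> eventually (P j)) ->
  eventually (fun k => forall j, (j < m)%nat -> P j k).
Proof.
  induction m; intros H; [exists O; intros; lia|].
  generalize (filter_and (F := eventually) _ _ (IHm (fun j Hj => H j ltac:(lia)))
                (H m ltac:(lia))).
  apply filter_imp. intros k [Hlt Hm] j Hj.
  destruct (Nat.eq_dec j m) as [->|ne]; [exact Hm | apply Hlt; lia].
Qed.

Definition coord_index {n} (c : coord n) : nat :=
  match c with Cx i => proj1_sig i | Cy i => n + proj1_sig i | Ctau => n + n end.

Definition coord_seq {n} (eta : Hpt n) (j : nat) : R :=
  if Compare_dec.lt_dec j n then idx_ext (hx eta) j
  else if Compare_dec.lt_dec j (n + n) then idx_ext (hy eta) (j - n) else htau eta.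

Lemma coord_index_lt n (c : coord n) : (coord_index c < n + n + 1)%nat.
Proof. destruct c as [[i hi]|[i hi]|]; simpl; lia. Qed.

Lemma coord_seq_index n (eta : Hpt n) c : coord_seq eta (coord_index c) = getc eta c.
Proof.
  unfold coord_seq. destruct c as [i|i|]; simpl;
    [pose proof (proj2_sig i) as Hi .. | ]; repeat destruct Compare_dec.lt_dec;
    simpl in *; try lia; try reflexivity.
  - apply idx_ext_at.
  - replace (n + proj1_sig i - n)%nat with (proj1_sig i) by lia. apply idx_ext_at.
Qed.

Lemma Rabs_coord_seq_le n (eta : Hpt n) j : Rabs (coord_seq eta j) <= 1 + rho eta.
Proof.
  pose proof (rho_nonneg n eta).
  unfold coord_seq, idx_ext; repeat destruct Compare_dec.lt_dec; try (rewrite Rabs_R0; lra).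
  - apply (Rabs_getc_le n eta (Cx _)).
  - apply (Rabs_getc_le n eta (Cy _)).
  - apply (Rabs_getc_le n eta Ctau).
Qed.

Lemma Hpt_subseq_cv n (eta : nat -> Hpt n) R0 : (forall k, rho (eta k) <= R0) ->
  exists phi, strict_incr phi /\
    exists es : Hpt n, filterlim (fun k => eta (phi k)) eventually (locally es).
Proof.
  intros Hb.
  destruct (bounded_seqs_common_subseq_cv (n + n + 1) (fun k j => coord_seq (eta k) j) (1 + R0))
    as [phi [Hphi [l Hl]]].
  { intros k j. eapply Rle_trans; [apply Rabs_coord_seq_le | specialize (Hb k); lra]. }
  set (es := ((fun i => l (proj1_sig i), fun i => l (n + proj1_sig i)%nat), l (n + n)%nat)
             : Hpt n).
  assert (Hes : forall c, getc es c = l (coord_index c)) by (destruct c; reflexivity).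
  exists phi. split; [exact Hphi|]. exists es.
  apply filterlim_locally; intro eps.
  generalize (eventually_forall_lt (n + n + 1)
                (fun j k => Rabs (coord_seq (eta (phi k)) j - l j) < eps)
                (fun j Hj => proj2 (is_lim_seq_spec _ _) (Hl j Hj) eps)).
  apply filter_imp; intros k Hk. apply ball_Hpt_intro; intro c.
  rewrite Hes, <- coord_seq_index. apply Hk, coord_index_lt.
Qed.

Lemma continuous_pos_lower_bound n (w : Hpt n -> R) R0 :
  (forall eta, continuous w eta) -> (forall eta, 0 < w eta) ->
  exists m, 0 < m /\ forall eta, rho eta <= R0 -> m <= w eta.
Proof.
  intros Hc Hpos. apply NNPP; intro Hno.
  assert (Hs : forall k : nat, exists eta, rho eta <= R0 /\ w eta < / INR (S k)).
  { intro k. apply NNPP; intro Hk. apply Hno. exists (/ INR (S k)). split.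
    - apply Rinv_0_lt_compat, lt_0_INR; lia.
    - intros eta He. apply Rnot_lt_le; intro Hw. apply Hk. now exists eta. }
  destruct (choice _ Hs) as [ef Hef].
  destruct (Hpt_subseq_cv n ef R0) as [phi [Hphi [es Hes]]]; [intro k; apply Hef|].
  assert (Hle : Rbar_le (w es) 0).
  { apply (is_lim_seq_le (fun k => w (ef (phi k))) (fun k => / INR (S k))).
    - intro k. apply Rlt_le. eapply Rlt_le_trans; [apply (proj2 (Hef (phi k)))|].
      apply Rinv_le_contravar; [apply lt_0_INR; lia|].
      apply le_INR. pose proof (strict_incr_ge phi Hphi k). lia.
    - exact (filterlim_comp _ _ _ (fun k => ef (phi k)) w _ (locally es) _ Hes (Hc es)).
    - apply is_lim_seq_inv_S. }
  specialize (Hpos es). simpl in Hle. lra.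
Qed.

(** * First contact time *)

Lemma exists_inf_approx (E : R -> Prop) b x0 : E x0 -> (forall x, E x -> b <= x) ->
  exists m, b <= m /\ (forall x, E x -> m <= x) /\
    forall eps, 0 < eps -> exists x, E x /\ x < m + eps.
Proof.
  intros Hx0 Hb.
  destruct (completeness (fun x => E (- x))) as [M [Hub Hleast]].
  - exists (- b). intros x Ex. specialize (Hb _ Ex). lra.
  - exists (- x0). now rewrite Ropp_involutive.
  - exists (- M). repeat split.
    + assert (M <= - b); [|lra]. apply Hleast. intros x Ex. specialize (Hb _ Ex). lra.
    + intros x Ex. assert (- x <= M); [|lra]. apply Hub. now rewrite Ropp_involutive.
    + intros eps Heps. apply NNPP; intro Hno.
      assert (M <= M - eps); [|lra]. apply Hleast. intros x Ex.
      apply Rnot_lt_le; intro Hx. apply Hno. exists (- x). split; [exact Ex | lra].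
Qed.

Lemma filterlim_pair_locally {T : Type} {F : (T -> Prop) -> Prop} {FF : Filter F}
    {U V : UniformSpace} (f : T -> U) (g : T -> V) x y :
  filterlim f F (locally x) -> filterlim g F (locally y) ->
  filterlim (fun t => (f t, g t)) F (locally (x, y)).
Proof.
  intros Hf Hg. apply filterlim_locally; intro eps.
  generalize (filter_and _ _ (proj1 (filterlim_locally f x) Hf eps)
                (proj1 (filterlim_locally g y) Hg eps)).
  apply filter_imp. intros t [H1 H2]. split; assumption.
Qed.

Lemma filterlim_within_of_eventually {T U : Type} {F : (T -> Prop) -> Prop} {FF : Filter F}
    (G : (U -> Prop) -> Prop) (z : T -> U) (D : U -> Prop) :
  filterlim z F G -> F (fun t => D (z t)) -> filterlim z F (within D G).
Proof.
  intros Hz HD P HP. generalize (filter_and _ _ (Hz _ HP) HD).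
  apply filter_imp. intros t [H1 H2]. exact (H1 H2).
Qed.

Definition cont_on_slab {n} (T : R) (f : space_time n -> R) : Prop :=
  forall t eta, 0 <= t <= T ->
    filterlim f (within (fun z : space_time n => 0 <= fst z <= T) (locally (t, eta)))
      (locally (f (t, eta))).

Lemma filterlim_time_left n (f : space_time n -> R) T t eta : 0 < t <= T ->
  filterlim f (within (fun z : space_time n => 0 <= fst z <= T) (locally (t, eta)))
    (locally (f (t, eta))) ->
  filterlim (fun s => f (s, eta)) (at_left t) (locally (f (t, eta))).
Proof.
  intros Ht Hf.
  apply (filterlim_comp _ _ _ (fun s => (s, eta)) f _
           (within (fun z : space_time n => 0 <= fst z <= T) (locally (t, eta))) _); [|exact Hf].
  apply filterlim_within_of_eventually.
  - apply (filterlim_pair_locally (fun s => s) (fun _ => eta));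
      [apply (filterlim_filter_le_1 (F := locally t)); [apply filter_le_within | apply filterlim_id]
      | apply filterlim_const].
  - exists (mkposreal t (proj1 Ht)); intros s Hs Hst. apply Rabs_lt_between' in Hs.
    simpl in *. lra.
Qed.

Section Comparison.

Variables (n : nat) (u v : R -> Hpt n -> R) (T t1 R0 : R).
Hypothesis Ht1 : 0 <= t1 <= T.
Hypothesis Hu : cont_on_slab T (uf u).
Hypothesis Hv : forall t eta, 0 <= t <= t1 -> continuous (uf v) (t, eta).
Hypothesis Hcross : forall t eta, 0 <= t <= t1 -> u t eta <= v t eta -> rho eta <= R0.

Lemma crossing_at_limit ts :
  (forall eps, 0 < eps -> exists t e, ts <= t < ts + eps /\ t <= t1 /\ u t e <= v t e) ->
  0 <= ts -> exists es, u ts es <= v ts es.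
Proof.
  intros Happrox Hts.
  assert (Hseq : forall k, exists z : space_time n,
             ts <= fst z < ts + / INR (S k) /\ fst z <= t1 /\ u (fst z) (snd z) <= v (fst z) (snd z)).
  { intro k. destruct (Happrox (/ INR (S k))) as [t [e He]];
      [apply Rinv_0_lt_compat, lt_0_INR; lia | now exists (t, e)]. }
  destruct (choice _ Hseq) as [z Hz].
  destruct (Hpt_subseq_cv n (fun k => snd (z k)) R0) as [phi [Hphi [es Hes]]].
  { intro k. destruct (Hz k) as [Hk [Hk1 Hk2]]. apply (Hcross (fst (z k))); lra. }
  assert (Hts1 : ts <= t1) by (destruct (Hz O); lra).
  set (zk := fun k => (fst (z (phi k)), snd (z (phi k))) : space_time n).
  assert (Hlim : filterlim zk eventually (locally (ts, es))).
  { apply filterlim_pair_locally; [|exact Hes].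
    change (is_lim_seq (fun k => fst (z (phi k))) ts).
    apply (is_lim_seq_le_le (fun _ => ts) _ (fun k => ts + / INR (S k))).
    - intro k. destruct (Hz (phi k)) as [Hk _]. split; [lra|].
      assert (/ INR (S (phi k)) <= / INR (S k)); [|lra].
      apply Rinv_le_contravar; [apply lt_0_INR; lia|].
      apply le_INR. pose proof (strict_incr_ge phi Hphi k). lia.
    - apply is_lim_seq_const.
    - replace (Finite ts) with (Rbar_plus ts 0) by (simpl; f_equal; ring).
      apply is_lim_seq_plus'; [apply is_lim_seq_const | apply is_lim_seq_inv_S]. }
  exists es.
  assert (Hle : Rbar_le (u ts es) (v ts es)).
  { apply (filterlim_le (F := eventually) (fun k => uf u (zk k)) (fun k => uf v (zk k))).
    - exists O. intros k _. apply (Hz (phi k)).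
    - apply (filterlim_comp _ _ _ zk (uf u) _
               (within (fun z : space_time n => 0 <= fst z <= T) (locally (ts, es))) _);
        [|apply Hu; lra].
      apply filterlim_within_of_eventually; [exact Hlim|].
      exists O. intros k _. destruct (Hz (phi k)). simpl. lra.
    - apply (filterlim_comp _ _ _ zk (uf v) _ (locally (ts, es)) _ Hlim), Hv. lra. }
  exact Hle.
Qed.

Hypothesis Hinit : forall eta, v 0 eta < u 0 eta.
Hypothesis Hno_contact : forall ts es, 0 < ts <= t1 ->
  (forall t, 0 <= t < ts -> forall eta, v t eta < u t eta) ->
  (forall eta, v ts eta <= u ts eta) -> v ts es = u ts es -> False.

Lemma comparison t eta : 0 <= t <= t1 -> v t eta < u t eta.
Proof.
  intros Ht. apply Rnot_le_lt; intro Hle.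
  set (E := fun s => 0 <= s <= t1 /\ exists e, u s e <= v s e).
  destruct (exists_inf_approx E 0 t) as [ts [Hts0 [Hts_lb Hts_approx]]];
    [split; [exact Ht | now exists eta] | now intros x [Hx _] |].
  destruct (crossing_at_limit ts) as [es Hes]; [|exact Hts0|].
  { intros eps Heps. destruct (Hts_approx eps Heps) as [x [[Hx [e He]] Hxe]].
    exists x, e. specialize (Hts_lb x (conj Hx (ex_intro _ e He))). repeat split; lra. }
  assert (Hts_t1 : ts <= t1) by (specialize (Hts_lb t (conj Ht (ex_intro _ eta Hle))); lra).
  assert (Hts_pos : 0 < ts).
  { destruct Hts0 as [|<-]; [assumption|]. specialize (Hinit es). lra. }
  assert (Hbefore : forall s, 0 <= s < ts -> forall e, v s e < u s e).
  { intros s Hs e. apply Rnot_le_lt; intro He.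
    assert (Hs1 : 0 <= s <= t1) by lra.
    specialize (Hts_lb s (conj Hs1 (ex_intro _ e He))). lra. }
  assert (Hall : forall e, v ts e <= u ts e).
  { intro e. change (Rbar_le (v ts e) (u ts e)).
    apply (filterlim_le (F := at_left ts) (fun s => v s e) (fun s => u s e)).
    - exists (mkposreal ts Hts_pos); intros s Hs Hst. apply Rabs_lt_between' in Hs.
      simpl in Hs. apply Rlt_le, Hbefore. lra.
    - apply (filterlim_time_left n (uf v) T); [lra|].
      apply (filterlim_filter_le_1 (F := locally (ts, e))); [apply filter_le_within|].
      apply Hv. lra.
    - apply (filterlim_time_left n (uf u) T); [lra | apply Hu; lra]. }
  apply (Hno_contact ts es); [lra | exact Hbefore | exact Hall |].
  apply Rle_antisym; [apply Hall | exact Hes].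
Qed.

End Comparison.

(** * The blowing-up subsolution *)

Lemma Rpower_pos x y : 0 < Rpower x y.
Proof. apply exp_pos. Qed.

Lemma Rpower_le_compat_neg x y e : 0 < x <= y -> e <= 0 -> Rpower y e <= Rpower x e.
Proof.
  intros Hxy He. replace e with (- - e) by ring.
  rewrite (Rpower_Ropp y (- e)), (Rpower_Ropp x (- e)).
  apply Rinv_le_contravar; [apply Rpower_pos | apply Rle_Rpower_l; lra].
Qed.

Lemma Rpower_le_self s q : 0 < s <= 1 -> 1 <= q -> Rpower s q <= s.
Proof.
  intros Hs Hq. replace q with (1 + (q - 1)) by ring. rewrite Rpower_plus, Rpower_1 by lra.
  assert (Rpower s (q - 1) <= 1).
  { apply Rle_trans with (Rpower 1 (q - 1)); [apply Rle_Rpower_l; lra|].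
    unfold Rpower. rewrite ln_1, Rmult_0_r, exp_0. lra. }
  pose proof (Rpower_pos s (q - 1)). nra.
Qed.

(* For small [s] the linear terms win, for larger [s] the power [s^p] does. *)
Lemma profile_pos p dl : 0 < p -> 0 < dl -> exists eps, 0 < eps /\
  forall s, 0 < s <= 1 -> 0 < Rpower s p + eps * dl * (1 - s) - 2 * eps * s.
Proof.
  intros Hp Hdl.
  set (s0 := dl / (2 * (dl + 2))).
  assert (Hs0 : 0 < s0) by (unfold s0; apply Rdiv_lt_0_compat; lra).
  exists (Rpower s0 p / 4). split; [pose proof (Rpower_pos s0 p); lra|].
  set (eps := Rpower s0 p / 4). intros s Hs.
  assert (Heps : 0 < eps) by (unfold eps; pose proof (Rpower_pos s0 p); lra).
  pose proof (Rpower_pos s p).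
  destruct (Rle_or_lt s s0) as [Hle|Hlt].
  - assert (s * (dl + 2) <= dl / 2).
    { apply Rle_trans with (s0 * (dl + 2)); [apply Rmult_le_compat_r; lra|].
      right. unfold s0. field. lra. }
    assert (0 < eps * dl) by (apply Rmult_lt_0_compat; lra).
    nra.
  - assert (Rpower s0 p < Rpower s p) by (apply Rlt_Rpower_l; lra).
    assert (0 <= eps * dl * (1 - s)) by (apply Rmult_le_pos; [apply Rmult_le_pos|]; lra).
    assert (eps * s <= eps) by (rewrite <- (Rmult_1_r eps) at 2; apply Rmult_le_compat_l; lra).
    unfold eps in *. lra.
Qed.

Definition origin (n : nat) : Hpt n := ((fun _ => 0, fun _ => 0), 0).

Lemma rho_origin n : rho (origin n) = 0.
Proof.
  unfold rho, zsq.
  replace (sum_idx n (fun k => hx (origin n) k ^ 2 + hy (origin n) k ^ 2))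
    with (sum_idx n (fun _ : idx n => 0 + 0 * 0)).
  - rewrite sum_idx_affine. unfold htau; simpl. ring.
  - f_equal. apply functional_extensionality; intro k. unfold hx, hy; simpl. ring.
Qed.

Lemma classical_solution_C2 n q p T u0 (u : R -> Hpt n -> R) t :
  classical_solution n q p T u0 u -> 0 < t < T -> C2 (u t).
Proof.
  intros [_ [Hreg _]] Ht c eta.
  assert (Hslice : continuous (fun e : Hpt n => ((t, e) : space_time n)) eta)
    by (apply (filterlim_pair_locally (fun _ => t) (fun e => e));
        [apply filterlim_const | apply filterlim_id]).
  destruct (Hreg t eta Ht) as [_ [_ Hc]]. destruct (Hc c) as [Hpd [Hcont Hc']].
  split; [exact Hpd|]. split.
  - exact (continuous_comp _ (fun z : space_time n => pd c (u (fst z)) (snd z)) eta Hslice Hcont).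
  - intro c'. destruct (Hc' c') as [H1 H2]. split; [exact H1|].
    exact (continuous_comp _ (fun z : space_time n => pd c' (pd c (u (fst z))) (snd z)) eta
             Hslice H2).
Qed.

(* The inequalities holding at a first contact point of [u = A s] with the
   subsolution of amplitude [A]. *)
Lemma profile_contradiction p q eps lam A s W Dl ut :
  1 <= q -> 0 < eps -> 0 < lam -> 0 < A -> 0 < s <= 1 -> 0 <= W <= eps * lam ->
  - (A * Rpower A (p - q - 1) / lam) * W <= Dl ->
  ut = Rpower (A * s) q * Dl + Rpower (A * s) p ->
  ut <= eps * Rpower A p * (1 - (p - q) * (1 - s)) ->
  0 < Rpower s p + eps * (p - q - 1) * (1 - s) - 2 * eps * s -> False.
Proof.
  intros Hq Heps Hlam HA Hs HW HDl Hut Hup Hprof.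
  rewrite <- !Rpower_mult_distr in Hut by lra.
  assert (HApow : Rpower A q * (A * Rpower A (p - q - 1)) = Rpower A p).
  { rewrite <- (Rpower_1 A) at 2 by exact HA. rewrite <- !Rpower_plus. f_equal. ring. }
  set (Aq := Rpower A q) in *; set (Ap := Rpower A p) in *.
  set (X := Rpower s q) in *; set (Y := Rpower s p) in *.
  assert (HAq : 0 < Aq) by apply Rpower_pos.
  assert (HAp : 0 < Ap) by apply Rpower_pos.
  assert (HX : 0 < X) by apply Rpower_pos.
  assert (HXs : X <= s) by (apply Rpower_le_self; lra).
  assert (Hdiff : - (Ap / lam) * X * W <= Aq * X * Dl).
  { replace (- (Ap / lam) * X * W) with (Aq * X * (- (A * Rpower A (p - q - 1) / lam) * W))
      by (rewrite <- HApow; field; lra).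
    apply Rmult_le_compat_l; [apply Rlt_le, Rmult_lt_0_compat|]; assumption. }
  assert (HXW : (Ap / lam) * X * W <= Ap * eps * s).
  { apply Rle_trans with ((Ap / lam) * X * (eps * lam)).
    - apply Rmult_le_compat_l; [apply Rmult_le_pos; [apply Rlt_le, Rdiv_lt_0_compat|]|]; lra.
    - replace (Ap / lam * X * (eps * lam)) with (Ap * eps * X) by (field; lra).
      apply Rmult_le_compat_l; [apply Rlt_le, Rmult_lt_0_compat|]; lra. }
  assert (0 < Ap * (Y + eps * (p - q - 1) * (1 - s) - 2 * eps * s))
    by (apply Rmult_lt_0_compat; assumption).
  nra.
Qed.

Section Subsolution.

Variables (p q eps lam a0 : R).
Hypothesis Hp : 1 < p.
Hypothesis Heps : 0 < eps.
Hypothesis Hlam : 0 < lam.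
Hypothesis Ha0 : 0 < a0.

(* [amp] is the solution of [a' = eps a^p], [a 0 = a0]; it blows up at [blowup_time]. *)
Definition blowup_time : R := Rpower a0 (1 - p) / (eps * (p - 1)).
Definition amp (t : R) : R := Rpower (eps * (p - 1) * (blowup_time - t)) (- / (p - 1)).

Lemma amp_pos t : 0 < amp t.
Proof. apply Rpower_pos. Qed.

Lemma amp_0 : amp 0 = a0.
Proof.
  unfold amp, blowup_time.
  replace (eps * (p - 1) * (Rpower a0 (1 - p) / (eps * (p - 1)) - 0))
    with (Rpower a0 (1 - p)) by (field; lra).
  rewrite Rpower_mult. replace ((1 - p) * - / (p - 1)) with 1 by (field; lra).
  apply Rpower_1, Ha0.
Qed.

Lemma amp_is_derive t : t < blowup_time -> is_derive amp t (eps * Rpower (amp t) p).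
Proof.
  intros Ht. set (e := - / (p - 1)).
  set (th := eps * (p - 1) * (blowup_time - t)).
  assert (Hth : 0 < th) by (unfold th; apply Rmult_lt_0_compat; [apply Rmult_lt_0_compat|]; lra).
  replace (eps * Rpower (amp t) p) with (scal (- (eps * (p - 1))) (e * Rpower th (e - 1))).
  - apply (is_derive_comp (fun x => Rpower x e) (fun s => eps * (p - 1) * (blowup_time - s))).
    + apply is_derive_Reals, derivable_pt_lim_power, Hth.
    + auto_derive; [exact I | ring].
  - unfold amp. fold e th. rewrite Rpower_mult.
    replace (e * p) with (e - 1) by (unfold e; field; lra).
    unfold scal; simpl; unfold mult; simpl. unfold e. field. lra.
Qed.

Lemma amp_ge t : 0 <= t < blowup_time -> a0 <= amp t.
Proof.
  intros Ht. rewrite <- amp_0. unfold amp.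
  apply Rpower_le_compat_neg.
  - split; [apply Rmult_lt_0_compat; [apply Rmult_lt_0_compat|]; lra|].
    apply Rmult_le_compat_l; [apply Rmult_le_pos|]; lra.
  - assert (0 < / (p - 1)) by (apply Rinv_0_lt_compat; lra). lra.
Qed.

Lemma amp_unbounded M : exists mu, 0 < mu /\
  forall t, blowup_time - mu < t < blowup_time -> M <= amp t.
Proof.
  set (M' := Rmax M 1). assert (HM' : 0 < M') by (unfold M'; pose proof (Rmax_r M 1); lra).
  assert (Hk : 0 < eps * (p - 1)) by (apply Rmult_lt_0_compat; lra).
  exists (Rpower M' (1 - p) / (eps * (p - 1))).
  split; [apply Rdiv_lt_0_compat; [apply Rpower_pos | exact Hk]|]. intros t Ht.
  apply Rle_trans with M'; [apply Rmax_l|].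
  replace M' with (Rpower (Rpower M' (1 - p)) (- / (p - 1)))
    by (rewrite Rpower_mult; replace ((1 - p) * - / (p - 1)) with 1 by (field; lra);
        apply Rpower_1, HM').
  unfold amp. apply Rpower_le_compat_neg.
  - split; [apply Rmult_lt_0_compat; lra|].
    replace (Rpower M' (1 - p)) with (eps * (p - 1) * (Rpower M' (1 - p) / (eps * (p - 1))))
      by (field; lra).
    apply Rmult_le_compat_l; lra.
  - assert (0 < / (p - 1)) by (apply Rinv_0_lt_compat; lra). lra.
Qed.

Lemma amp_Rpower_is_derive r t : t < blowup_time ->
  is_derive (fun s => Rpower (amp s) r) t (r * Rpower (amp t) (r - 1) * (eps * Rpower (amp t) p)).
Proof.
  intros Ht.
  replace (r * Rpower (amp t) (r - 1) * (eps * Rpower (amp t) p))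
    with (scal (eps * Rpower (amp t) p) (r * Rpower (amp t) (r - 1)))
    by (unfold scal; simpl; unfold mult; simpl; ring).
  apply (is_derive_comp (fun x => Rpower x r) amp).
  - apply is_derive_Reals, derivable_pt_lim_power, amp_pos.
  - now apply amp_is_derive.
Qed.

Definition sub {n} (t : R) (eta : Hpt n) : R :=
  amp t * (1 - Rpower (amp t) (p - q - 1) * rho eta / lam).

Lemma sub_origin n t : sub t (origin n) = amp t.
Proof. unfold sub. rewrite rho_origin. field. lra. Qed.

Lemma sub_le_amp n t (eta : Hpt n) : sub t eta <= amp t.
Proof.
  unfold sub. pose proof (amp_pos t). pose proof (rho_nonneg n eta).
  pose proof (Rpower_pos (amp t) (p - q - 1)).
  assert (0 <= Rpower (amp t) (p - q - 1) * rho eta / lam)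
    by (apply Rmult_le_pos; [apply Rmult_le_pos | apply Rlt_le, Rinv_0_lt_compat]; lra).
  nra.
Qed.

Lemma rho_le_1_of_sub_pos n t (eta : Hpt n) :
  lam <= Rpower (amp t) (p - q - 1) -> 0 < sub t eta -> rho eta <= 1.
Proof.
  unfold sub. intros HlamA Hpos.
  pose proof (amp_pos t). pose proof (rho_nonneg n eta).
  assert (Hlt : Rpower (amp t) (p - q - 1) * rho eta / lam < 1).
  { apply Rnot_le_lt; intro Hge. assert (amp t * (1 - Rpower (amp t) (p - q - 1) * rho eta / lam) <= 0)
      by (apply Rmult_le_0_l; lra). lra. }
  apply Rmult_lt_compat_r with (r := lam) in Hlt; [|exact Hlam].
  replace (Rpower (amp t) (p - q - 1) * rho eta / lam * lam)
    with (Rpower (amp t) (p - q - 1) * rho eta) in Hlt by (field; lra).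
  nra.
Qed.

Lemma sub_is_derive n (eta : Hpt n) t : t < blowup_time ->
  is_derive (fun s => sub s eta) t
    (eps * Rpower (amp t) p * (1 - (p - q) * Rpower (amp t) (p - q - 1) * rho eta / lam)).
Proof.
  intros Ht. set (d := p - q - 1). set (A := amp t).
  assert (HA : 0 < A) by apply amp_pos.
  assert (HAd : A * Rpower A (d - 1) = Rpower A d).
  { rewrite <- (Rpower_1 A) at 1 by exact HA. rewrite <- Rpower_plus. f_equal. ring. }
  assert (Hg : is_derive (fun s => 1 - rho eta / lam * Rpower (amp s) d) t
                 (- (rho eta / lam * (d * Rpower A (d - 1) * (eps * Rpower A p))))).
  { rewrite <- Rminus_0_l. apply (is_derive_minus (fun _ => 1)); [auto_derive; auto|].
    apply is_derive_scal, amp_Rpower_is_derive, Ht. }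
  apply (is_derive_ext (fun s => amp s * (1 - rho eta / lam * Rpower (amp s) d))).
  { intro s. unfold sub. fold d. apply (f_equal (Rmult (amp s))). unfold Rdiv. ring. }
  replace (eps * Rpower A p * (1 - (p - q) * Rpower A d * rho eta / lam))
    with (plus (mult (eps * Rpower A p) (1 - rho eta / lam * Rpower A d))
               (mult A (- (rho eta / lam * (d * Rpower A (d - 1) * (eps * Rpower A p)))))).
  - apply (is_derive_mult amp (fun s => 1 - rho eta / lam * Rpower (amp s) d) t);
      [now apply amp_is_derive | exact Hg | intros; apply Rmult_comm].
  - unfold plus, mult; simpl.
    replace (A * - (rho eta / lam * (d * Rpower A (d - 1) * (eps * Rpower A p))))
      with (- (rho eta / lam * (d * (A * Rpower A (d - 1)) * (eps * Rpower A p)))) by ring.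
    rewrite HAd. unfold d. field. lra.
Qed.

Lemma continuous_sub n t (eta : Hpt n) : t < blowup_time -> continuous (uf sub) (t, eta).
Proof.
  intros Ht. set (d := p - q - 1).
  assert (Hamp : continuous (fun z : space_time n => amp (fst z)) (t, eta)).
  { apply (continuous_comp fst amp); [apply continuous_fst|].
    exact (ex_derive_continuous amp t (ex_intro _ _ (amp_is_derive t Ht))). }
  assert (Hpow : continuous (fun z : space_time n => Rpower (amp (fst z)) d) (t, eta)).
  { apply (continuous_comp fst (fun s => Rpower (amp s) d)); [apply continuous_fst|].
    exact (ex_derive_continuous _ t (ex_intro _ _ (amp_Rpower_is_derive d t Ht))). }
  assert (Hrho : continuous (fun z : space_time n => rho (snd z)) (t, eta))
    by (apply (continuous_comp snd rho); [apply continuous_snd | apply continuous_rho]).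
  apply (continuous_ext (fun z : space_time n =>
           mult (amp (fst z)) (minus 1 (mult (mult (Rpower (amp (fst z)) d) (rho (snd z))) (/ lam))))).
  { intro z. unfold uf, sub, minus, plus, opp, mult; simpl. fold d. field. lra. }
  set (g := fun z : space_time n => mult (Rpower (amp (fst z)) d) (rho (snd z))).
  apply (continuous_mult (K := R_AbsRing) (fun z => amp (fst z))
           (fun z => minus 1 (mult (g z) (/ lam)))); [exact Hamp|].
  apply (continuous_minus (V := R_NormedModule) (fun _ => 1) (fun z => mult (g z) (/ lam)));
    [apply continuous_const|].
  apply (continuous_mult g (fun _ => / lam)); [|apply continuous_const].
  apply (continuous_mult (K := R_AbsRing) (fun z => Rpower (amp (fst z)) d)); assumption.
Qed.

Lemma lam_le_amp_Rpower t : 0 <= p - q - 1 -> lam <= Rpower a0 (p - q - 1) ->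
  0 <= t < blowup_time -> lam <= Rpower (amp t) (p - q - 1).
Proof.
  intros Hd Hlam0 Ht. eapply Rle_trans; [exact Hlam0|].
  apply Rle_Rpower_l; [exact Hd | split; [exact Ha0 | now apply amp_ge]].
Qed.

Lemma sub_0_lt_scaled n (w : Hpt n -> R) m : 0 < m -> lam <= Rpower a0 (p - q - 1) ->
  (forall eta, 0 < w eta) -> (forall eta, rho eta <= 1 -> m <= w eta) ->
  forall eta, sub 0 eta < 2 * a0 / m * w eta.
Proof.
  intros Hm Hlam0 Hpos Hball eta.
  assert (HA : 0 < 2 * a0 / m) by (apply Rdiv_lt_0_compat; lra).
  destruct (Rle_or_lt (sub 0 eta) 0) as [Hle | Hgt].
  - pose proof (Rmult_lt_0_compat _ _ HA (Hpos eta)). lra.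
  - apply Rle_lt_trans with (amp 0); [apply sub_le_amp|]. rewrite amp_0.
    assert (Hw : m <= w eta)
      by (apply Hball, (rho_le_1_of_sub_pos n 0); [now rewrite amp_0 | exact Hgt]).
    apply Rmult_le_compat_l with (r := 2 * a0 / m) in Hw; [|lra].
    replace (2 * a0 / m * m) with (2 * a0) in Hw by (field; lra). lra.
Qed.

(* At a first contact point [u = sub] the solution lies above the paraboloid
   [sub ts], which bounds [DeltaH u] from below, while [u_t <= sub_t]. *)
Lemma sub_no_contact n (u : R -> Hpt n -> R) u0 T ts es :
  1 <= q -> 4 * INR n + 8 <= eps * lam ->
  (forall s, 0 < s <= 1 -> 0 < Rpower s p + eps * (p - q - 1) * (1 - s) - 2 * eps * s) ->
  classical_solution n q p T u0 u -> 0 < ts < T -> ts < blowup_time ->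
  lam <= Rpower (amp ts) (p - q - 1) ->
  (forall t, 0 <= t < ts -> forall eta, sub t eta < u t eta) ->
  (forall eta, sub ts eta <= u ts eta) -> sub ts es = u ts es -> 0 < u ts es -> False.
Proof.
  intros Hq Hn Hprof Hsol Hts HtsB HlamA Hbefore Hall Heq Hupos.
  set (A := amp ts); set (s := 1 - Rpower A (p - q - 1) * rho es / lam).
  assert (HA : 0 < A) by apply amp_pos.
  assert (Hus : u ts es = A * s) by (rewrite <- Heq; reflexivity).
  assert (Hs : 0 < s <= 1).
  { split; [apply (Rmult_lt_reg_l A); lra|].
    assert (0 <= Rpower A (p - q - 1) * rho es / lam); [|unfold s; lra].
    apply Rmult_le_pos; [apply Rmult_le_pos; [apply Rlt_le, Rpower_pos | apply rho_nonneg]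
                       | apply Rlt_le, Rinv_0_lt_compat, Hlam]. }
  assert (HW : 0 <= 4 * INR n + 8 * zsq es <= eps * lam).
  { assert (rho es <= 1) by (apply (rho_le_1_of_sub_pos n ts es HlamA); lra).
    pose proof (zsq_nonneg n es); pose proof (zsq_le_rho n es); pose proof (pos_INR n). lra. }
  destruct (proj1 (proj2 Hsol) ts es Hts) as [Hex _].
  apply (profile_contradiction p q eps lam A s (4 * INR n + 8 * zsq es) (DeltaH (u ts) es)
           (Derive (fun t => u t es) ts)); try assumption.
  - apply (DeltaH_ge_of_paraboloid n (u ts) es A); [now apply (classical_solution_C2 n q p T u0) | |].
    + intro eta. eapply Rle_trans; [|apply Hall]. right. unfold sub. fold A. field. lra.
    + rewrite <- Heq. unfold sub. fold A. field. lra.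
  - rewrite <- Hus. apply (proj1 (proj2 (proj2 Hsol)) ts es Hts).
  - replace (eps * Rpower A p * (1 - (p - q) * (1 - s)))
      with (eps * Rpower A p * (1 - (p - q) * Rpower A (p - q - 1) * rho es / lam))
      by (unfold s; field; lra).
    assert (Hdiff : Derive (fun t => u t es) ts
                      - eps * Rpower A p * (1 - (p - q) * Rpower A (p - q - 1) * rho es / lam) <= 0).
    { apply (is_derive_nonpos_of_left_pos (fun t => u t es - sub t es) ts _ ts).
      - apply (is_derive_minus (fun t => u t es) (fun t => sub t es));
          [now apply Derive_correct | now apply sub_is_derive].
      - rewrite Heq. ring.
      - lra.
      - intros t Ht. specialize (Hbefore t ltac:(lra) es). lra. }
    lra.
  - now apply Hprof.
Qed.

Lemma sub_below_solution n (u : R -> Hpt n -> R) u0 T :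
  1 <= q -> 0 <= p - q - 1 -> lam <= Rpower a0 (p - q - 1) -> 4 * INR n + 8 <= eps * lam ->
  (forall s, 0 < s <= 1 -> 0 < Rpower s p + eps * (p - q - 1) * (1 - s) - 2 * eps * s) ->
  classical_solution n q p T u0 u -> blowup_time <= T ->
  (forall t eta, 0 <= t -> 0 < u t eta) -> (forall eta, sub 0 eta < u0 eta) ->
  forall t eta, 0 <= t < blowup_time -> sub t eta < u t eta.
Proof.
  intros Hq Hd Hlam0 Hn Hprof Hsol HT Hpos Hinit t eta Ht.
  apply (comparison n u sub T t 1); [lra | exact (proj1 Hsol) | | | | | lra].
  - intros t' e Ht'. apply continuous_sub. lra.
  - intros t' e Ht' Hle. apply (rho_le_1_of_sub_pos n t');
      [apply lam_le_amp_Rpower; lra | specialize (Hpos t' e ltac:(lra)); lra].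
  - intro e. destruct Hsol as [_ [_ [_ Hu0]]]. now rewrite Hu0.
  - intros ts es Hts Hbefore Hall Heq.
    apply (sub_no_contact n u u0 T ts es); try assumption; try lra.
    + apply lam_le_amp_Rpower; lra.
    + apply Hpos. lra.
Qed.

Lemma blowup_time_pos : 0 < blowup_time.
Proof. apply Rdiv_lt_0_compat; [apply Rpower_pos | apply Rmult_lt_0_compat; lra]. Qed.

Lemma not_above_amp_up_to_blowup n (u : R -> Hpt n -> R) T eta :
  blowup_time < T -> cont_on_slab T (uf u) ->
  ~ (forall t, 0 <= t < blowup_time -> amp t < u t eta).
Proof.
  intros HT Hu Habove. pose proof blowup_time_pos as HTb.
  destruct (amp_unbounded (u blowup_time eta + 1)) as [mu [Hmu Hamp]].
  assert (Hle : Rbar_le (u blowup_time eta + 1) (u blowup_time eta)).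
  { apply (filterlim_le (F := at_left blowup_time) (fun _ => u blowup_time eta + 1)
             (fun t => u t eta)).
    - exists (mkposreal _ (Rmin_pos _ _ Hmu HTb)). intros t Ht Htlt.
      apply Rabs_lt_between' in Ht. simpl in Ht.
      pose proof (Rmin_l mu blowup_time); pose proof (Rmin_r mu blowup_time).
      apply Rlt_le, Rle_lt_trans with (amp t); [apply Hamp | apply Habove]; lra.
    - apply filterlim_const.
    - apply (filterlim_time_left n (uf u) T); [lra | apply Hu; lra]. }
  simpl in Hle. lra.
Qed.

End Subsolution.

Theorem mainTheorem10 :
  forall (n : nat) (q p : R),
    (1 <= n)%nat -> 1 <= q -> 1 < p -> q + 1 < p ->
    forall w : Hpt n -> R,
      continuous_bounded w -> (forall eta, 0 < w eta) ->
      exists A : R, 0 < A /\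
        ~ (exists u : R -> Hpt n -> R,
             global_classical_solution n q p (fun eta => A * w eta) u /\
             positive_solution u).
Proof.
  intros n q p _ Hq Hp Hpq w [Hwc _] Hwpos.
  destruct (profile_pos p (p - q - 1)) as [eps [Heps Hprof]]; [lra | lra |].
  set (lam := (4 * INR n + 8) / eps).
  assert (Hlam : 0 < lam) by (apply Rdiv_lt_0_compat; [pose proof (pos_INR n) |]; lra).
  set (a0 := Rpower lam (/ (p - q - 1))).
  assert (Ha0 : 0 < a0) by apply Rpower_pos.
  assert (Ha0lam : lam <= Rpower a0 (p - q - 1))
    by (right; symmetry; unfold a0; rewrite Rpower_mult, Rinv_l, Rpower_1; lra).
  destruct (continuous_pos_lower_bound n w 1 Hwc Hwpos) as [m [Hm Hmw]].
  exists (2 * a0 / m). split; [apply Rdiv_lt_0_compat; lra|].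
  intros [u [Hglob Hpos]].
  set (Tb := blowup_time p eps a0).
  assert (HTb : 0 < Tb) by (apply blowup_time_pos; assumption).
  pose proof (Hglob (Tb + 1) ltac:(lra)) as Hsol.
  apply (not_above_amp_up_to_blowup p eps a0 Hp Heps n u (Tb + 1) (origin n));
    [fold Tb; lra | exact (proj1 Hsol) |].
  intros t Ht. rewrite <- (sub_origin p q eps lam a0 Hlam n).
  apply (sub_below_solution p q eps lam a0 Hp Heps Hlam Ha0 n u
           (fun eta => 2 * a0 / m * w eta) (Tb + 1)); try assumption; try (fold Tb; lra).
  - unfold lam. right. field. lra.
  - now apply sub_0_lt_scaled.
Qed.
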